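(* Let $\mathcal{S}$ and $\mathcal{A}$ be finite state and action spaces, $\gamma\in[0,1)$, $\mu$ a start-state distribution on $\mathcal{S}$, $P(s'|s,a)$ and $P_m(s'|s,a)$ two state transition probabilities, and $\pi(a|s)$, $\pi'(a|s)$ arbitrary policies. Then $$\big\|\mathbf{d}^{\pi'}-\mathbf{d}^{\pi}_m\big\|_1 \le \frac{2\gamma}{1-\gamma}\Big(\mathbb{E}_{s\sim d^\pi_m}\big[D_{TV}(\pi'(\cdot|s)\|\pi(\cdot|s))\big] + \mathbb{E}_{s\sim d^\pi_m,\,a\sim\pi}\big[D_{TV}(P(\cdot|s,a)\|P_m(\cdot|s,a))\big]\Big).$$
   Context: $d^{\pi'}(s)=(1-\gamma)\sum_{t\ge0}\gamma^t\Pr(S_t=s\mid\pi',P)$ is the discounted stationary state distribution under policy $\pi'$ and dynamics $P$ with $S_0\sim\mu$, and $d^\pi_m(s)=(1-\gamma)\sum_{t\ge0}\gamma^t\Pr(S_t=s\mid\pi,P_m)$ the corresponding distribution under policy $\pi$ and dynamics $P_m$ with the same start distribution $\mu$; $\mathbf{d}^{\pi'},\mathbf{d}^\pi_m\in\mathbb{R}^{|\mathcal{S}|}$ are their vector forms. $D_{TV}(p\|q)=\frac12\sum_x|p(x)-q(x)|$ is the total variation distance. *)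

From HB Require Import structures.
From mathcomp Require Import all_boot all_order all_algebra.
From mathcomp Require Import all_classical all_reals all_analysis.
Set Implicit Arguments. Unset Strict Implicit. Unset Printing Implicit Defensive.
Import Order.TTheory GRing.Theory Num.Theory.
Local Open Scope ring_scope.

Section MDP.
Variables (R : realType) (S A : finType).

Definition is_distr (T : finType) (p : T -> R) : Prop :=
  (forall x, 0 <= p x) /\ \sum_(x : T) p x = 1.

(* transition kernel P(s'|s,a) written P s a s' ; policy pi(a|s) written pi s a *)
Definition is_kernel (P : S -> A -> S -> R) : Prop :=
  forall s a, is_distr (P s a).
Definition is_policy (pi : S -> A -> R) : Prop :=
  forall s, is_distr (pi s).

Fixpoint state_prob (mu : S -> R) (P : S -> A -> S -> R) (pi : S -> A -> R)
  (t : nat) (s' : S) : R :=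
  match t with
  | O => mu s'
  | t.+1 => \sum_(s : S) state_prob mu P pi t s * \sum_(a : A) pi s a * P s a s'
  end.

(* discounted stationary state distribution
   d(s) = (1-gamma) sum_{t>=0} gamma^t Pr(S_t = s), the series taken as the
   limit of its partial sums (it converges since 0 <= gamma < 1) *)
Definition disc_state_distr (gamma : R) (mu : S -> R) (P : S -> A -> S -> R)
  (pi : S -> A -> R) (s : S) : R :=
  (1 - gamma) * limn (fun n => \sum_(0 <= t < n) gamma ^+ t * state_prob mu P pi t s).

End MDP.

Definition D_TV (R : realType) (T : finType) (p q : T -> R) : R :=
  2^-1 * \sum_(x : T) `|p x - q x|.

(* Let x_t and y_t be the state marginals of the chains driven by (P, pi')
   and (P_m, pi), and gap(s) the l1 distance between their one-step state
   kernels at s.  Pushing x_t - y_t through a stochastic kernel does not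
   increase its l1 norm, so
     ||x_(t+1) - y_(t+1)|| <= ||x_t - y_t|| + E_(s ~ y_t)[gap s],
   and gap(s) <= 2 TV(pi'(s), pi(s)) + 2 E_(a ~ pi(s)) TV(P(s,a), P_m(s,a)).
   As x_0 = y_0, weighting the recursion by gamma^t and summing gives
     (1 - gamma) sum_t gamma^t ||x_t - y_t||
       <= gamma sum_t gamma^t E_(y_t)[gap],
   first for every finite horizon and then, in the limit, for the
   discounted distributions. *)

From HB Require Import structures.
From mathcomp Require Import all_boot all_order all_algebra.
From mathcomp Require Import all_classical all_reals all_analysis.
From mathcomp Require Import ring lra.
Import Order.TTheory GRing.Theory Num.Theory.
Import numFieldNormedType.Exports.
Set Implicit Arguments. Unset Strict Implicit. Unset Printing Implicit Defensive.
Local Open Scope classical_set_scope.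
Local Open Scope ring_scope.

Section Mixture.
Variables (R : realType) (I J : finType).

Definition mix (p : I -> R) (K : I -> J -> R) (j : J) : R := \sum_i p i * K i j.

Lemma is_distr_mix (p : I -> R) (K : I -> J -> R) :
  is_distr p -> (forall i, is_distr (K i)) -> is_distr (mix p K).
Proof.
move=> [p_ge0 p_sum1] K_distr; split=> [j|].
  by apply: sumr_ge0 => i _; rewrite mulr_ge0 // (K_distr i).1.
rewrite /mix exchange_big /= -p_sum1; apply: eq_bigr => i _.
by rewrite -mulr_sumr (K_distr i).2 mulr1.
Qed.

Lemma l1_mix_le (p q : I -> R) (K K' : I -> J -> R) :
  (forall i, is_distr (K i)) -> (forall i, 0 <= q i) ->
  \sum_j `|mix p K j - mix q K' j|
    <= \sum_i `|p i - q i| + \sum_i q i * \sum_j `|K i j - K' i j|.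
Proof.
move=> K_distr q_ge0.
have mixB j : mix p K j - mix q K' j
    = \sum_i ((p i - q i) * K i j + q i * (K i j - K' i j)).
  by rewrite -sumrB; apply: eq_bigr => i _; ring.
apply: (@le_trans _ _
    (\sum_j \sum_i (`|p i - q i| * K i j + q i * `|K i j - K' i j|))).
  apply: ler_sum => j _; rewrite mixB; apply: (le_trans (ler_norm_sum _ _ _)).
  apply: ler_sum => i _; apply: (le_trans (ler_normD _ _)).
  by rewrite !normrM (ger0_norm ((K_distr i).1 j)) (ger0_norm (q_ge0 i)).
rewrite exchange_big -big_split /=; apply: ler_sum => i _.
by rewrite big_split /= -!mulr_sumr (K_distr i).2 mulr1.
Qed.

End Mixture.

Lemma distr_bounds (R : realType) (T : finType) (p : T -> R) x :
  is_distr p -> 0 <= p x <= 1.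
Proof.
case=> p_ge0 p_sum1; rewrite p_ge0 -p_sum1 (bigD1 x) //= lerDl.
exact: sumr_ge0.
Qed.

Lemma two_D_TV (R : realType) (T : finType) (p q : T -> R) :
  2 * D_TV p q = \sum_x `|p x - q x|.
Proof. by rewrite /D_TV mulrA mulfV ?mul1r // pnatr_eq0. Qed.

Lemma state_prob_distr (R : realType) (S A : finType) (mu : S -> R)
    (P : S -> A -> S -> R) (pi : S -> A -> R) t :
  is_distr mu -> is_kernel P -> is_policy pi -> is_distr (state_prob mu P pi t).
Proof.
move=> mu_distr P_kernel pi_policy; elim: t => [|t IH] //=.
exact: (is_distr_mix IH (fun s => is_distr_mix (pi_policy s) (P_kernel s))).
Qed.

Section DiscountedSum.
Variables (R : realType) (g : R).

Definition disc_psum (f : nat -> R) (n : nat) : R :=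
  \sum_(0 <= t < n) g ^+ t * f t.

Lemma geometric_psumE n : (1 - g) * \sum_(0 <= t < n) g ^+ t = 1 - g ^+ n.
Proof.
elim: n => [|n IH]; first by rewrite big_geq // mulr0 expr0 subrr.
by rewrite big_nat_recr //= mulrDr IH exprS; ring.
Qed.

Hypotheses (g_ge0 : 0 <= g) (g_lt1 : g < 1).

Lemma disc_psum_nondecreasing (f : nat -> R) :
  (forall t, 0 <= f t) -> nondecreasing_seq (disc_psum f).
Proof.
move=> f_ge0; apply/nondecreasing_seqP => n.
by rewrite /disc_psum big_nat_recr //= lerDl mulr_ge0 ?exprn_ge0.
Qed.

Lemma disc_psum_cvg (f : nat -> R) :
  (forall t, 0 <= f t <= 1) -> cvgn (disc_psum f).
Proof.
move=> f01; have g1_gt0 : 0 < 1 - g by rewrite subr_gt0.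
apply: nondecreasing_is_cvgn.
  by apply: disc_psum_nondecreasing => t; case/andP: (f01 t).
exists (1 - g)^-1 => _ [n _ <-].
apply: (@le_trans _ _ (\sum_(0 <= t < n) g ^+ t)).
  apply: ler_sum => t _; case/andP: (f01 t) => _ f_le1.
  by rewrite ler_piMr ?exprn_ge0.
rewrite -[X in _ <= X]mulr1 ler_pdivlMl // geometric_psumE gerDl oppr_le0.
exact: exprn_ge0.
Qed.

Lemma disc_psum_lim_ge0 (f : nat -> R) :
  (forall t, 0 <= f t <= 1) -> 0 <= limn (disc_psum f).
Proof.
move=> f01; apply: limr_ge; first exact: disc_psum_cvg.
apply: nearW => n; apply: sumr_ge0 => t _.
by case/andP: (f01 t) => f_ge0 _; rewrite mulr_ge0 ?exprn_ge0.
Qed.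

Lemma disc_psum_recursion_le (a c : nat -> R) n :
  a 0%N = 0 -> (forall t, 0 <= a t) -> (forall t, a t.+1 <= a t + c t) ->
  (1 - g) * disc_psum a n <= g * disc_psum c n.
Proof.
move=> a0 a_ge0 a_rec.
(* The tail g^m a_m is carried along only to make the induction go through. *)
have invariant m :
    (1 - g) * disc_psum a m + g ^+ m * a m <= g * disc_psum c m.
  elim: m => [|m IH]; first by rewrite /disc_psum !big_geq // a0 !mulr0 addr0.
  have step : g ^+ m.+1 * a m.+1 <= g ^+ m.+1 * (a m + c m).
    by rewrite ler_wpM2l ?exprn_ge0.
  move: IH step; rewrite /disc_psum !big_nat_recr //= exprS.
  set G := g ^+ m; set Sa := \sum_(0 <= t < m) _; set Sc := \sum_(0 <= t < m) _.
  by move=> IH step; nra.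
apply: le_trans (invariant n); rewrite lerDl.
by rewrite mulr_ge0 ?exprn_ge0.
Qed.

End DiscountedSum.

Lemma cvgn_sum (R : realType) (I : finType) (f : I -> nat -> R) (l : I -> R) :
  (forall i, f i @ \oo --> l i) -> (fun n => \sum_i f i n) @ \oo --> \sum_i l i.
Proof. by move=> f_cvg; apply: cvg_big => //; exact: add_continuous. Qed.

Lemma disc_state_distr_ge0 (R : realType) (S A : finType) (gamma : R)
    (mu : S -> R) (P : S -> A -> S -> R) (pi : S -> A -> R) s :
  0 <= gamma -> gamma < 1 -> is_distr mu -> is_kernel P -> is_policy pi ->
  0 <= disc_state_distr gamma mu P pi s.
Proof.
move=> g_ge0 g_lt1 mu_distr P_kernel pi_policy.
apply: mulr_ge0; first by rewrite subr_ge0 ltW.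
apply: (disc_psum_lim_ge0 g_ge0 g_lt1 (f := (state_prob mu P pi)^~ s)) => t.
exact/distr_bounds/state_prob_distr.
Qed.

Section Perturbation.
Variables (R : realType) (S A : finType) (gamma : R)
  (mu : S -> R) (P Pm : S -> A -> S -> R) (pi pi' : S -> A -> R).
Hypotheses (g_ge0 : 0 <= gamma) (g_lt1 : gamma < 1) (mu_distr : is_distr mu)
  (P_kernel : is_kernel P) (Pm_kernel : is_kernel Pm)
  (pi_policy : is_policy pi) (pi'_policy : is_policy pi').

Let x t := state_prob mu P pi' t.
Let y t := state_prob mu Pm pi t.
Let kernel_gap s := \sum_s' `|mix (pi' s) (P s) s' - mix (pi s) (Pm s) s'|.

Lemma kernel_gap_le s :
  kernel_gap s <= 2 * (D_TV (pi' s) (pi s)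
                       + \sum_a pi s a * D_TV (P s a) (Pm s a)).
Proof.
rewrite mulrDr two_D_TV mulr_sumr.
under [X in _ + X]eq_bigr do rewrite mulrCA two_D_TV.
by apply: l1_mix_le => [a|a]; [exact: P_kernel | exact: (pi_policy s).1].
Qed.

Lemma l1_state_probS_le t :
  \sum_s `|x t.+1 s - y t.+1 s|
    <= \sum_s `|x t s - y t s| + \sum_s y t s * kernel_gap s.
Proof.
apply: l1_mix_le => [s|s]; first exact: is_distr_mix.
exact: (state_prob_distr t mu_distr Pm_kernel pi_policy).1.
Qed.

Lemma l1_disc_psum_le n :
  (1 - gamma) * \sum_s `|disc_psum gamma (x^~ s) n - disc_psum gamma (y^~ s) n|
    <= gamma * \sum_s kernel_gap s * disc_psum gamma (y^~ s) n.
Proof.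
have triangle : \sum_s `|disc_psum gamma (x^~ s) n - disc_psum gamma (y^~ s) n|
    <= disc_psum gamma (fun t => \sum_s `|x t s - y t s|) n.
  rewrite /disc_psum; under [X in _ <= X]eq_bigr do rewrite mulr_sumr.
  rewrite [X in _ <= X]exchange_big /=; apply: ler_sum => s _.
  rewrite -sumrB; apply: (le_trans (ler_norm_sum _ _ _)); apply: ler_sum => t _.
  by rewrite -mulrBr normrM ger0_norm ?exprn_ge0.
have swap : disc_psum gamma (fun t => \sum_s y t s * kernel_gap s) n
    = \sum_s kernel_gap s * disc_psum gamma (y^~ s) n.
  rewrite /disc_psum; under eq_bigr do rewrite mulr_sumr.
  rewrite exchange_big /=; apply: eq_bigr => s _.
  by rewrite mulr_sumr; apply: eq_bigr => t _; ring.
rewrite -swap.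
apply: (le_trans _ (disc_psum_recursion_le g_ge0 n _ _ l1_state_probS_le)).
- by apply: ler_wpM2l triangle; rewrite subr_ge0 ltW.
- by rewrite big1 // => s _; rewrite subrr normr0.
- by move=> t; apply: sumr_ge0.
Qed.

Lemma l1_disc_state_distr_le :
  \sum_s `|disc_state_distr gamma mu P pi' s - disc_state_distr gamma mu Pm pi s|
    <= gamma / (1 - gamma)
       * \sum_s disc_state_distr gamma mu Pm pi s * kernel_gap s.
Proof.
set Lx := fun s => limn (disc_psum gamma (x^~ s)).
set Ly := fun s => limn (disc_psum gamma (y^~ s)).
have x_cvg s : disc_psum gamma (x^~ s) @ \oo --> Lx s.
  by apply: disc_psum_cvg => // t; exact/distr_bounds/state_prob_distr.
have y_cvg s : disc_psum gamma (y^~ s) @ \oo --> Ly s.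
  by apply: disc_psum_cvg => // t; exact/distr_bounds/state_prob_distr.
have lim_le : (1 - gamma) * \sum_s `|Lx s - Ly s|
    <= gamma * \sum_s kernel_gap s * Ly s.
  have lhs_cvg : (fun n => (1 - gamma) *
        \sum_s `|disc_psum gamma (x^~ s) n - disc_psum gamma (y^~ s) n|)
      @ \oo --> (1 - gamma) * \sum_s `|Lx s - Ly s|.
    apply: cvgMl_tmp; apply: cvgn_sum => s.
    by apply: cvg_norm; apply: cvgB.
  have rhs_cvg :
      (fun n => gamma * \sum_s kernel_gap s * disc_psum gamma (y^~ s) n)
      @ \oo --> gamma * \sum_s kernel_gap s * Ly s.
    apply: cvgMl_tmp; apply: cvgn_sum => s.
    exact: cvgMl_tmp.
  by apply: (ler_cvg_to lhs_cvg rhs_cvg); apply: nearW; exact: l1_disc_psum_le.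
have g1_gt0 : 0 < 1 - gamma by rewrite subr_gt0.
have d'E s : disc_state_distr gamma mu P pi' s = (1 - gamma) * Lx s by [].
have dmE s : disc_state_distr gamma mu Pm pi s = (1 - gamma) * Ly s by [].
under eq_bigr do rewrite d'E dmE -mulrBr normrM (gtr0_norm g1_gt0).
under [X in _ <= _ * X]eq_bigr do rewrite dmE.
rewrite -mulr_sumr.
have -> : gamma / (1 - gamma) * \sum_s (1 - gamma) * Ly s * kernel_gap s
    = gamma * \sum_s kernel_gap s * Ly s.
  by rewrite !mulr_sumr; apply: eq_bigr => s _; field; rewrite lt0r_neq0.
exact: lim_le.
Qed.

End Perturbation.

Theorem lemma1 (R : realType) (S A : finType) (gamma : R)
  (mu : S -> R) (P Pm : S -> A -> S -> R) (pi pi' : S -> A -> R) :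
  0 <= gamma -> gamma < 1 ->
  is_distr mu -> is_kernel P -> is_kernel Pm ->
  is_policy pi -> is_policy pi' ->
  let d' := disc_state_distr gamma mu P pi' in
  let dm := disc_state_distr gamma mu Pm pi in
  \sum_(s : S) `|d' s - dm s|
    <= (2 * gamma) / (1 - gamma) *
       (\sum_(s : S) dm s * D_TV (pi' s) (pi s)
        + \sum_(s : S) dm s * \sum_(a : A) pi s a * D_TV (P s a) (Pm s a)).
Proof.
move=> g_ge0 g_lt1 mu_distr P_kernel Pm_kernel pi_policy pi'_policy; cbv zeta.
set dm := disc_state_distr gamma mu Pm pi.
apply: le_trans (l1_disc_state_distr_le g_ge0 g_lt1 mu_distr P_kernel Pm_kernel
                   pi_policy pi'_policy) _.
have -> : 2 * gamma / (1 - gamma) *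
      (\sum_s dm s * D_TV (pi' s) (pi s)
       + \sum_s dm s * \sum_a pi s a * D_TV (P s a) (Pm s a))
    = gamma / (1 - gamma) * \sum_s dm s * (2 * (D_TV (pi' s) (pi s)
                                 + \sum_a pi s a * D_TV (P s a) (Pm s a))).
  rewrite -big_split !mulr_sumr; apply: eq_bigr => s _ /=; ring.
apply: ler_wpM2l; first by rewrite divr_ge0 // subr_ge0 ltW.
apply: ler_sum => s _; apply: ler_wpM2l; first exact: disc_state_distr_ge0.
exact: kernel_gap_le.
Qed.
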